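(* Let $n\ge1$ and $s\in D^n$. Then $\sum_{i=1}^{n}L_i\le\left\lfloor\frac{(n+1)^2}{4}\right\rfloor$.
   Context: Let $D$ be a commutative integral domain with $1\neq 0$. For $s=(s_1,\dots,s_n)\in D^n$, a polynomial $f\in D[x]$ annihilates $s$ if $f=0$, or $d=\deg f\ge0$ and $\sum_{k=0}^{d}f_ks_{j-d+k}=0$ for all $d+1\le j\le n$. The linear complexity $L(s)$ is the least degree of a nonzero annihilator of $s$, and $L_i=L(s_1,\dots,s_i)$. *)

From mathcomp Require Import all_boot all_order all_algebra.
Set Implicit Arguments. Unset Strict Implicit. Unset Printing Implicit Defensive.
Import GRing.Theory.
Local Open Scope ring_scope.

(* A finite sequence s = (s_1,...,s_n) in D^n is a [seq D] of size n;
   s_j (1-indexed) is s`_(j-1).  For f with d = deg f = (size f).-1,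
   f annihilates s iff f = 0 or for all d+1 <= j <= n,
   sum_{k=0}^d f_k s_{j-d+k} = 0.  With j' = j - 1 ranging over d <= j' < n,
   s_{j-d+k} = s`_(j'-d+k). *)
Definition annihilates (D : idomainType) (f : {poly D}) (s : seq D) : Prop :=
  f = 0 \/
  (forall j : nat, ((size f).-1 <= j)%N -> (j < size s)%N ->
     \sum_(k < (size f).-1.+1) f`_k * s`_(j - (size f).-1 + k) = 0).

(* is_linear_complexity s L : L is the least degree of a nonzero
   annihilator of s, i.e. L = L(s).  (Such L exists -- 'X^(size s) is a
   nonzero annihilator -- and is clearly unique.) *)
Definition is_linear_complexity (D : idomainType) (s : seq D) (L : nat) : Prop :=
  (exists f : {poly D}, f != 0 /\ (size f).-1 = L /\ annihilates f s) /\
  (forall f : {poly D}, f != 0 -> annihilates f s -> (L <= (size f).-1)%N).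

(* Massey's jump bound: if a shortest annihilator f of s_1..s_N fails at s_{N+1},
   subtracting a suitable multiple of the shifted annihilator g that failed at the
   last jump cancels the discrepancy, so L_{N+1} <= max(L_N, N+1-L_N).  Induction
   on N then gives L_1 + ... + L_N <= L_N (N+1-L_N), and l (m-l) <= m^2/4. *)
From mathcomp Require Import all_boot all_order all_algebra.
From mathcomp Require Import zify.
Set Implicit Arguments. Unset Strict Implicit. Unset Printing Implicit Defensive.
Import GRing.Theory.

Lemma leq_add_mul_subn l l' N T :
  l <= N.+1 -> l <= l' <= maxn l (N.+1 - l) -> T <= l * (N.+1 - l) ->
  T + l' <= l' * (N.+2 - l').
Proof. move=> ? /andP[? ?] ?; nia. Qed.

Lemma leq_mul_subn_sqr_div4 l m : l * (m - l) <= m ^ 2 %/ 4.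
Proof.
rewrite leq_divRL //; case: (leqP l m) => [/subnK | /ltnW/eqP ->]; last first.
  by rewrite muln0.
move: (m - l) => b <-.
by case: (leqP l b) => [/subnK | /ltnW/subnK] <-; nia.
Qed.

Section Discrepancy.
Local Open Scope ring_scope.
Variables (D : idomainType) (s : seq D).
Local Notation deg p := (size p).-1.

Definition discrepancy (p : {poly D}) (d j : nat) : D :=
  \sum_(k < d.+1) p`_k * s`_(j - d + k).

Definition annihilates_prefix (p : {poly D}) (N : nat) : Prop :=
  forall j, (deg p <= j)%N -> (j < N)%N -> discrepancy p (deg p) j = 0.

Definition fails_at (g : {poly D}) (r : nat) : Prop :=
  [/\ g != 0, (deg g <= r)%N, annihilates_prefix g r
    & discrepancy g (deg g) r != 0].

Lemma discrepancyB (p q : {poly D}) d j :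
  discrepancy (p - q) d j = discrepancy p d j - discrepancy q d j.
Proof. by rewrite /discrepancy -sumrB; apply: eq_bigr => k _; rewrite coefB mulrBl. Qed.

Lemma discrepancyZ (a : D) (p : {poly D}) d j :
  discrepancy (a *: p) d j = a * discrepancy p d j.
Proof. by rewrite /discrepancy mulr_sumr; apply: eq_bigr => k _; rewrite coefZ mulrA. Qed.

Lemma discrepancy_widen (p : {poly D}) e d j :
  (size p <= e.+1)%N -> (e <= d)%N -> (d <= j)%N ->
  discrepancy p d j = discrepancy p e (j - (d - e)).
Proof.
move=> sz_p le_ed le_dj; rewrite /discrepancy.
rewrite -(big_mkord xpredT (fun k => p`_k * s`_(j - d + k))).
rewrite -(big_mkord xpredT (fun k => p`_k * s`_(j - (d - e) - e + k))).
rewrite (big_cat_nat _ (n := e.+1)) //=.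
rewrite [X in _ + X]big1_seq ?addr0; last first.
  move=> k /andP[_]; rewrite mem_index_iota => /andP[le_ek _].
  by rewrite nth_default ?mul0r // (leq_trans sz_p le_ek).
by apply: eq_bigr => k _; congr (_ * s`_ _); lia.
Qed.

Lemma discrepancy_mulXn (p : {poly D}) a d j :
  (a <= d)%N -> (d <= j)%N ->
  discrepancy (p * 'X^a) d j = discrepancy p (d - a) j.
Proof.
move=> le_ad le_dj; rewrite /discrepancy.
rewrite -(big_mkord xpredT (fun k => (p * 'X^a)`_k * s`_(j - d + k))).
rewrite -(big_mkord xpredT (fun k => p`_k * s`_(j - (d - a) + k))).
rewrite (big_cat_nat _ (n := a)) //=; last by rewrite ltnW.
rewrite [X in X + _]big1_seq ?add0r; last first.
  by move=> k /andP[_]; rewrite mem_index_iota => /andP[_ lt_ka]; rewrite coefMXn lt_ka mul0r.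
rewrite -{1}(add0n a) big_addn subSn //.
apply: eq_bigr => k _; rewrite coefMXn ltnNge leq_addl addnK /=.
by congr (_ * s`_ _); lia.
Qed.

Lemma discrepancy1 j : discrepancy 1 0 j = s`_j.
Proof. by rewrite /discrepancy big_ord1 coef1 mul1r subn0 addn0. Qed.

Lemma annihilates_prefixS (p : {poly D}) N :
  annihilates_prefix p N -> discrepancy p (deg p) N = 0 ->
  annihilates_prefix p N.+1.
Proof. by move=> ann_p dN j le_pj; rewrite ltnS leq_eqVlt => /predU1P[->|]; auto. Qed.

Lemma annihilates_prefix_leq (p : {poly D}) N M :
  (N <= M)%N -> annihilates_prefix p M -> annihilates_prefix p N.
Proof. by move=> le_NM ann_p j le_pj lt_jN; apply: ann_p (leq_trans lt_jN le_NM). Qed.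

Lemma annihilates_prefixXn N : annihilates_prefix 'X^N N.
Proof. by move=> j; rewrite size_polyXn /= => /leq_ltn_trans h /h; rewrite ltnn. Qed.

Lemma annihilates_prefix1 N :
  (forall j, (j < N)%N -> s`_j = 0) -> annihilates_prefix 1 N.
Proof. by move=> s0 j _ lt_jN; rewrite size_poly1 discrepancy1 s0. Qed.

Lemma annihilates_take (p : {poly D}) N :
  (N <= size s)%N -> annihilates p (take N s) <-> p = 0 \/ annihilates_prefix p N.
Proof.
move=> le_Ns; rewrite /annihilates size_takel //.
have take_sum j : (deg p <= j)%N -> (j < N)%N ->
    \sum_(k < (deg p).+1) p`_k * (take N s)`_(j - deg p + k) = discrepancy p (deg p) j.
  move=> le_pj lt_jN; apply: eq_bigr => k _; rewrite nth_take //.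
  by have := ltn_ord k; lia.
split=> -[-> | ann_p]; [by left | right | by left | right] => j le_pj lt_jN.
  by rewrite -take_sum ?ann_p.
by rewrite take_sum ?ann_p.
Qed.

(* Berlekamp-Massey update: cancel the discrepancy of f at N against that of
   the earlier annihilator g, which failed at r, shifted by N - r positions. *)
Lemma massey_update (f g : {poly D}) N r :
  f != 0 -> annihilates_prefix f N -> fails_at g r -> (r < N)%N ->
  (deg g + deg f <= r.+1)%N ->
  exists h : {poly D}, [/\ h != 0, deg h = maxn (deg f) (N.+1 - deg f)
                         & annihilates_prefix h N.+1].
Proof.
move=> nz_f ann_f [nz_g le_gr ann_g dg_r] lt_rN le_fg.
have size_f : size f = (deg f).+1 by rewrite prednK // size_poly_gt0.
have size_g : size g = (deg g).+1 by rewrite prednK // size_poly_gt0.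
set M := maxn (deg f) (N.+1 - deg f).
have le_fM : (deg f <= M)%N := leq_maxl _ _.
have le_gM : (deg g + (N - r) <= M)%N by apply: leq_trans (leq_maxr _ _); lia.
set c := (M - (deg g + (N - r)))%N.
set df := discrepancy f (deg f) N; set dg := discrepancy g (deg g) r.
pose h := dg *: (f * 'X^(M - deg f)) - df *: (g * 'X^c).
have size_h : size h = M.+1.
  have size_lhs : size (dg *: (f * 'X^(M - deg f))) = M.+1.
    by rewrite size_scale // size_mulXn // size_f; lia.
  rewrite size_polyDl size_lhs // size_polyN ltnS.
  by apply: leq_trans (size_scale_leq _ _) _; rewrite size_mulXn // size_g; lia.
exists h; split; first by rewrite -size_poly_gt0 size_h.
  by rewrite size_h.
move=> j; rewrite size_h /= => le_Mj lt_jN.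
rewrite discrepancyB !discrepancyZ !discrepancy_mulXn ?leq_subr // !subKn //.
rewrite (@discrepancy_widen g (deg g) (deg g + (N - r)) j); first last.
- exact: leq_trans le_gM le_Mj.
- exact: leq_addr.
- by rewrite size_g.
rewrite addKn; move: lt_jN; rewrite ltnS leq_eqVlt => /predU1P[-> | lt_jN].
  by rewrite subKn 1?ltnW // mulrC subrr.
rewrite ann_f ?ann_g ?mulr0 ?subrr //; [lia | lia | exact: leq_trans le_fM le_Mj].
Qed.

End Discrepancy.

Section LinearComplexityProfile.
Local Open Scope ring_scope.
Variables (D : idomainType) (s : seq D) (lc : nat -> nat).
Hypothesis lcP : forall N, (N <= size s)%N -> is_linear_complexity (take N s) (lc N).
Local Notation deg p := (size p).-1.
Local Notation discrepancy := (discrepancy s).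
Local Notation annihilates_prefix := (annihilates_prefix s).
Local Notation fails_at := (fails_at s).

Lemma lc_annihilator N : (N <= size s)%N ->
  exists f : {poly D}, [/\ f != 0, deg f = lc N & annihilates_prefix f N].
Proof.
move=> le_Ns; have [[f [nz_f [deg_f ann_f]]] _] := lcP le_Ns.
have [f0 | ann_pf] := (annihilates_take f le_Ns).1 ann_f.
  by rewrite f0 eqxx in nz_f.
by exists f.
Qed.

Lemma lc_min N (f : {poly D}) : (N <= size s)%N ->
  f != 0 -> annihilates_prefix f N -> (lc N <= deg f)%N.
Proof. by move=> le_Ns nz_f ann_f; apply: (lcP le_Ns).2 => //; apply/annihilates_take; auto. Qed.

Lemma lc_leq N : (N <= size s)%N -> (lc N <= N)%N.
Proof.
move=> le_Ns; have := lc_min le_Ns _ (@annihilates_prefixXn _ s N).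
by rewrite size_polyXn; apply; rewrite -size_poly_gt0 size_polyXn.
Qed.

Lemma lc_leqS N : (N < size s)%N -> (lc N <= lc N.+1)%N.
Proof.
move=> lt_Ns; have [f [nz_f <- ann_f]] := lc_annihilator lt_Ns.
exact: lc_min (ltnW lt_Ns) nz_f (annihilates_prefix_leq (leqnSn N) ann_f).
Qed.

(* [g] failed at the last position [r] where the complexity grew; an all-zero
   prefix plays the role of r = -1, g = 1. *)
Definition massey_invariant N : Prop :=
  (forall j, (j < N)%N -> s`_j = 0) \/
  exists r (g : {poly D}), [/\ (r < N)%N, (deg g + lc N <= r.+1)%N & fails_at g r].

Lemma lc_jump N : (N < size s)%N -> massey_invariant N ->
  (lc N.+1 <= maxn (lc N) (N.+1 - lc N))%N.
Proof.
move=> lt_Ns [s0 | [r [g [lt_rN le_glc fail_g]]]].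
  have lc0 : lc N = 0%N.
    apply/eqP; rewrite -leqn0.
    by have := lc_min (ltnW lt_Ns) (oner_neq0 _) (annihilates_prefix1 s0); rewrite size_poly1.
  by rewrite lc0 subn0 max0n lc_leq.
have [f [nz_f deg_f ann_f]] := lc_annihilator (ltnW lt_Ns).
have [dN0 | _] := eqVneq (discrepancy f (deg f) N) 0.
  rewrite -deg_f; apply: leq_trans (leq_maxl _ _).
  exact: lc_min lt_Ns nz_f (annihilates_prefixS ann_f dN0).
rewrite -deg_f in le_glc *.
have [h [nz_h <- ann_h]] := massey_update nz_f ann_f fail_g lt_rN le_glc.
exact: lc_min lt_Ns nz_h ann_h.
Qed.

Lemma massey_invariantS N : (N < size s)%N -> massey_invariant N -> massey_invariant N.+1.
Proof.
move=> lt_Ns inv; have [le_lcS | lt_lcS] := leqP (lc N.+1) (lc N).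
  case: inv => [s0 | [r [g [lt_rN le_glc fail_g]]]].
    have [sN0 | sN] := eqVneq s`_N 0.
      by left=> j; rewrite ltnS leq_eqVlt => /predU1P[-> | /s0].
    right; exists N, 1; split=> //; first by rewrite size_poly1 lc_leq.
    split; rewrite ?size_poly1 ?discrepancy1 ?oner_neq0 //.
    exact: annihilates_prefix1.
  right; exists r, g; split=> //; first exact: ltnW.
  by apply: leq_trans le_glc; rewrite leq_add2l.
have [f [nz_f deg_f ann_f]] := lc_annihilator (ltnW lt_Ns).
have dN : discrepancy f (deg f) N != 0.
  apply: contraTneq lt_lcS => dN0; rewrite -leqNgt -deg_f.
  exact: lc_min lt_Ns nz_f (annihilates_prefixS ann_f dN0).
have le_lcS : (lc N.+1 <= N.+1 - lc N)%N.
  by have := lc_jump lt_Ns inv; rewrite leq_max leqNgt lt_lcS.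
right; exists N, f; split=> //; first by rewrite deg_f; lia.
by split; rewrite // deg_f lc_leq // ltnW.
Qed.

Lemma massey_invariant_all N : (N <= size s)%N -> massey_invariant N.
Proof.
elim: N => [|N IH] le_Ns; first by left.
exact: massey_invariantS le_Ns (IH (ltnW le_Ns)).
Qed.

Lemma sum_lc_leq N : (N <= size s)%N ->
  (\sum_(1 <= i < N.+1) lc i <= lc N * (N.+1 - lc N))%N.
Proof.
elim: N => [|N IH] le_Ns; first by rewrite big_geq.
rewrite big_nat_recr //=; apply: leq_add_mul_subn (IH (ltnW le_Ns)).
  exact: leq_trans (lc_leq (ltnW le_Ns)) (leqnSn N).
rewrite lc_leqS // lc_jump //; exact: massey_invariant_all (ltnW le_Ns).
Qed.

End LinearComplexityProfile.

Theorem mainTheorem12 (D : idomainType) (n : nat) (s : seq D) (L : nat -> nat) :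
  (1 <= n)%N -> size s = n ->
  (forall i : nat, (1 <= i <= n)%N -> is_linear_complexity (take i s) (L i)) ->
  (\sum_(1 <= i < n.+1) L i <= (n.+1 ^ 2) %/ 4)%N.
Proof.
move=> _ size_s LP.
pose lc i := if i is 0 then 0%N else L i.
have lcP N : (N <= size s)%N -> is_linear_complexity (take N s) (lc N).
  case: N => [_ | N le_Ns]; last by apply: LP; rewrite -size_s le_Ns.
  split=> [|f _ _]; last exact: leq0n.
  by exists 1%R; rewrite oner_neq0 size_poly1 take0; do !split; right.
rewrite -size_s (eq_big_nat _ _ (F2 := lc)) => [|[]//].
exact: leq_trans (sum_lc_leq lcP (leqnn _)) (leq_mul_subn_sqr_div4 _ _).
Qed.
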